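(* Let $A$ be a ring, $M$ a left $A$-module, and $F$ an additive subgroup of $M$. Then $W(F) \cap A^\times = (A(F) \cap A^\times)^{-1}$. Moreover, the multiplicative monoid $W(F) \cap A(F) = \{a \in A \mid (F :_M a) = F\}$ is the largest subset $T$ of $A$ for which $F$ is both a $T$-submodule and a $T$-factroid of $M$.
   Context: Rings are unital, not necessarily commutative. For $a\in A$, $(F:_M a)=\{x\in M\mid ax\in F\}$. $W(F)=\{a\in A\mid (F:_M a)\subseteq F\}$ and $A(F)=\{a\in A\mid aF\subseteq F\}$. For $T\subseteq A$, a $T$-factroid of $M$ is an additive subgroup $F$ with $(F:_M t)\subseteq F$ for all $t\in T$, and a $T$-submodule of $M$ is an additive subgroup $F$ with $tF\subseteq F$ for all $t\in T$. For $X\subseteq A^\times$, $X^{-1}=\{x^{-1}\mid x\in X\}$. *)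

From HB Require Import structures.
From mathcomp Require Import all_boot all_order all_algebra.
Set Implicit Arguments. Unset Strict Implicit. Unset Printing Implicit Defensive.
Import GRing.Theory.
Local Open Scope ring_scope.

Section Defs.
Variables (A : unitRingType) (M : lmodType A).

Definition additive_subgroup (F : M -> Prop) : Prop :=
  F 0 /\ (forall x y, F x -> F y -> F (x - y)).

Definition colon (F : M -> Prop) (a : A) : M -> Prop := fun x => F (a *: x).

Definition Wset (F : M -> Prop) : A -> Prop :=
  fun a => forall x, colon F a x -> F x.

Definition Aset (F : M -> Prop) : A -> Prop :=
  fun a => forall x, F x -> F (a *: x).

Definition factroid (T : A -> Prop) (F : M -> Prop) : Prop :=
  additive_subgroup F /\ forall t, T t -> forall x, colon F t x -> F x.

Definition tsubmodule (T : A -> Prop) (F : M -> Prop) : Prop :=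
  additive_subgroup F /\ forall t, T t -> forall x, F x -> F (t *: x).
End Defs.

From HB Require Import structures.
From mathcomp Require Import all_boot all_order all_algebra.
Import GRing.Theory.
Local Open Scope ring_scope.

(* For a unit u, (F :_M u) = u^-1 F, so "(F :_M u) is contained in F" and
   "u^-1 F is contained in F" are the same condition.  The conditions defining
   W(F) and A(F) are the two inclusions between (F :_M a) and F, and both are
   stable under products because (F :_M ab) = ((F :_M a) :_M b). *)

Section StabilizersOfSubgroup.
Variables (A : unitRingType) (M : lmodType A) (F : M -> Prop).

Lemma Aset_invr_of_Wset (u : A) :
  u \is a GRing.unit -> Wset F u -> Aset F u^-1.
Proof. by move=> Uu Wu x Fx; apply: Wu; rewrite /colon scalerA mulrV ?scale1r. Qed.

Lemma Wset_invr_of_Aset (u : A) :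
  u \is a GRing.unit -> Aset F u -> Wset F u^-1.
Proof. by move=> Uu Au x; rewrite /colon => /Au; rewrite scalerA mulrV ?scale1r. Qed.

Lemma Wset_unit_invrE (a : A) :
  (Wset F a /\ a \is a GRing.unit) <->
  (exists b : A, (Aset F b /\ b \is a GRing.unit) /\ a = b^-1).
Proof.
split=> [[Wa Ua] | [b [[Ab Ub] ->]]].
- exists a^-1; rewrite unitrV invrK.
  by split=> //; split=> //; exact: Aset_invr_of_Wset.
- by rewrite unitrV; split; first exact: Wset_invr_of_Aset.
Qed.

Lemma Wset_Aset_colonE (a : A) :
  (Wset F a /\ Aset F a) <-> (forall x, colon F a x <-> F x).
Proof. by split=> [[Wa Aa] x | colonE]; [split=> [/Wa | /Aa] | split=> x /colonE]. Qed.

Lemma Wset1 : Wset F 1.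
Proof. by move=> x; rewrite /colon scale1r. Qed.

Lemma Aset1 : Aset F 1.
Proof. by move=> x; rewrite scale1r. Qed.

Lemma WsetM (a b : A) : Wset F a -> Wset F b -> Wset F (a * b).
Proof. by move=> Wa Wb x; rewrite /colon -scalerA => /Wa /Wb. Qed.

Lemma AsetM (a b : A) : Aset F a -> Aset F b -> Aset F (a * b).
Proof. by move=> Aa Ab x /Ab /Aa; rewrite scalerA. Qed.

End StabilizersOfSubgroup.

Theorem proposition3p9 (A : unitRingType) (M : lmodType A) (F : M -> Prop) :
  additive_subgroup F ->
  (* W(F) ∩ A^× = (A(F) ∩ A^×)^{-1} *)
  (forall a : A,
     (Wset F a /\ a \is a GRing.unit) <->
     (exists b : A, (Aset F b /\ b \is a GRing.unit) /\ a = b^-1))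
  (* W(F) ∩ A(F) = { a | (F :_M a) = F } *)
  /\ (forall a : A, (Wset F a /\ Aset F a) <-> (forall x, colon F a x <-> F x))
  (* W(F) ∩ A(F) is a multiplicative monoid *)
  /\ (Wset F 1 /\ Aset F 1)
  /\ (forall a b : A, Wset F a /\ Aset F a -> Wset F b /\ Aset F b ->
        Wset F (a * b) /\ Aset F (a * b))
  (* it is the largest T such that F is a T-submodule and a T-factroid *)
  /\ (tsubmodule (fun a => Wset F a /\ Aset F a) F /\
      factroid (fun a => Wset F a /\ Aset F a) F)
  /\ (forall T : A -> Prop, tsubmodule T F -> factroid T F ->
        forall t, T t -> Wset F t /\ Aset F t).
Proof.
move=> subF; split; first exact: Wset_unit_invrE.
split; first exact: Wset_Aset_colonE.
split; first by split; [exact: Wset1 | exact: Aset1].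
split; first by move=> a b [Wa Aa] [Wb Ab]; split; [exact: WsetM | exact: AsetM].
split; first by split; split=> // t [].
by move=> T [_ AT] [_ WT] t Tt; split; [exact: WT | exact: AT].
Qed.
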